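(* Let $A$ and $B$ be meet-semilattices such that, identifying $A$ with its image $\{{\downarrow}a : a\in A\}$ in $\mathcal{BL} A$, we have $A\subseteq B\subseteq \mathcal{BL} A$ with $A$ a sub-meet-semilattice of $B$ and $B$ a sub-meet-semilattice of $\mathcal{BL} A$. Then $\mathcal{BL} B\cong \mathcal{BL} A$.
   Context: A meet-semilattice is a poset in which all finite meets exist (so it has a top $1$ but need not have a bottom). For a meet-semilattice $A$, a subset $S\subseteq A$ whose join $\bigvee S$ exists in $A$ is called admissible (and $\bigvee S$ a distributive join) if for every $a\in A$ the join $\bigvee\{a\wedge s: s\in S\}$ exists and equals $a\wedge\bigvee S$. A downset $E$ of $A$ is a D-ideal if $\bigvee S\in E$ for every admissible $S\subseteq E$. The Bruns–Lakser completion $\mathcal{BL} A$ is the set of all D-ideals of $A$ ordered by inclusion; it is a frame, and $a\mapsto {\downarrow}a$ embeds $A$ as a join-dense sub-meet-semilattice of $\mathcal{BL} A$. *)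

From HB Require Import structures.
From mathcomp Require Import all_boot all_order.
Set Implicit Arguments. Unset Strict Implicit. Unset Printing Implicit Defensive.
Import Order.TTheory.
Local Open Scope order_scope.

Section Generic.
Variables (T : Type) (le : T -> T -> Prop).

Definition is_ub (S : T -> Prop) (x : T) : Prop := forall s, S s -> le s x.
Definition is_lub (S : T -> Prop) (x : T) : Prop :=
  is_ub S x /\ forall y, is_ub S y -> le x y.
Definition is_meet (a b m : T) : Prop :=
  le m a /\ le m b /\ forall y, le y a -> le y b -> le y m.

Definition admissible (S : T -> Prop) : Prop :=
  exists j, is_lub S j /\
    forall a m, is_meet a j m ->
      is_lub (fun x => exists2 s, S s & is_meet a s x) m.

Definition downset (E : T -> Prop) : Prop :=
  forall x y, le x y -> E y -> E x.

Definition D_ideal (E : T -> Prop) : Prop :=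
  downset E /\
  forall S, (forall s, S s -> E s) -> admissible S ->
    forall j, is_lub S j -> E j.

Definition BL : Type := {E : T -> Prop | D_ideal E}.
Definition BL_le (X Y : BL) : Prop :=
  forall x, proj1_sig X x -> proj1_sig Y x.

End Generic.

Definition order_iso (X Y : Type) (leX : X -> X -> Prop) (leY : Y -> Y -> Prop)
  : Prop :=
  exists (f : X -> Y) (g : Y -> X),
    cancel f g /\ cancel g f /\ forall x y, leX x y <-> leY (f x) (f y).

Definition down (d : Order.disp_t) (A : porderType d) (a : A) : A -> Prop :=
  fun x => x <= a.

(* B as an ordered type: a family Bs of subsets of A, ordered by inclusion *)
Definition subfam (A : Type) (Bs : (A -> Prop) -> Prop) : Type :=
  {E : A -> Prop | Bs E}.
Definition subfam_le (A : Type) (Bs : (A -> Prop) -> Prop)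
  (X Y : subfam Bs) : Prop :=
  forall x, proj1_sig X x -> proj1_sig Y x.

From HB Require Import structures.
From mathcomp Require Import all_boot all_order.
From Stdlib Require Import FunctionalExtensionality PropExtensionality ProofIrrelevance.
Set Implicit Arguments. Unset Strict Implicit. Unset Printing Implicit Defensive.
Import Order.TTheory.
Local Open Scope order_scope.

(* The isomorphism sends a D-ideal F of B to {a | ↓a ∈ F} and a D-ideal E of A
   to {X ∈ B | X ⊆ E}. Both maps land in D-ideals and are mutually inverse
   because joins transfer in both directions: an admissible join j of S in A
   makes ↓j the admissible join of {↓s | s ∈ S} in B, every X ∈ B is the
   admissible join of {↓x | x ∈ X}, and if J is the admissible join of S in B,
   each m ∈ J is the admissible join in A of the elements of ⋃S below m. *)

Lemma is_lub_ext T (le : T -> T -> Prop) (P Q : T -> Prop) m :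
  (forall x, P x <-> Q x) -> is_lub le P m -> is_lub le Q m.
Proof.
move=> PQ [ubm lubm]; split=> [s /PQ | y uby]; first exact: ubm.
by apply: lubm => s /PQ; apply: uby.
Qed.

Lemma BL_ext T (le : T -> T -> Prop) (X Y : BL le) :
  (forall x, proj1_sig X x <-> proj1_sig Y x) -> X = Y.
Proof.
case: X Y => [X HX] [Y HY] /= XY; apply: subset_eq_compat.
by apply: functional_extensionality => x; apply: propositional_extensionality.
Qed.

Section MeetSemilattice.
Variables (d : Order.disp_t) (A : meetSemilatticeType d).
Implicit Types (a b j z : A) (S : A -> Prop).
Local Notation le := (@Order.le d A).

Lemma is_lub_unique S j j' : is_lub le S j -> is_lub le S j' -> j = j'.
Proof. by move=> [ubj lubj] [ubj' lubj']; apply: le_anti; rewrite lubj ?lubj'. Qed.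

Lemma is_meetE a b m : is_meet le a b m <-> m = a `&` b.
Proof.
split=> [[ma [mb glb]] | ->]; first by apply: le_anti; rewrite lexI ma mb glb ?leIl ?leIr.
split; [exact: leIl | split; [exact: leIr | by move=> y ya yb; rewrite lexI ya yb]].
Qed.

Definition meet_image a S : A -> Prop := fun x => exists2 s, S s & x = a `&` s.

Lemma admissibleE S : admissible le S <->
  exists2 j, is_lub le S j & forall a, is_lub le (meet_image a S) (a `&` j).
Proof.
have imageE a x : (exists2 s, S s & is_meet le a s x) <-> meet_image a S x.
  by split=> -[s Ss /is_meetE xE]; exists s.
split=> [[j [lubj distr]] | [j lubj distr]]; exists j => //.
- by move=> a; apply: is_lub_ext (distr a _ (proj2 (is_meetE _ _ _) erefl)) => x.
- by split=> // a m /is_meetE ->; apply: is_lub_ext (distr a) => x; rewrite imageE.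
Qed.

Lemma admissible_meet_image S j z : admissible le S -> is_lub le S j -> z <= j ->
  admissible le (meet_image z S) /\ is_lub le (meet_image z S) z.
Proof.
move=> /admissibleE[j' lubj' distr] lubj zj.
have jE := is_lub_unique lubj' lubj; subst j'.
have lub_image a : a <= j -> is_lub le (meet_image a S) a.
  by move=> aj; have := distr a; rewrite (meet_idPl aj).
split; last exact: lub_image.
apply/admissibleE; exists z; first exact: lub_image.
move=> b; apply: is_lub_ext (lub_image _ (le_trans (leIr z b) zj)) => x.
split=> [[s Ss ->] | [t [s Ss ->] ->]]; last by exists s; rewrite ?meetA.
by exists (z `&` s); [exists s | rewrite meetA].
Qed.

End MeetSemilattice.

Section Subfamily.
Variables (d : Order.disp_t) (A : meetSemilatticeType d).
Variable Bs : (A -> Prop) -> Prop.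
Hypothesis Bs_D_ideal : forall E, Bs E -> D_ideal (@Order.le d A) E.
Hypothesis Bs_down : forall a : A, Bs (down a).
Hypothesis Bs_cap : forall E F, Bs E -> Bs F -> Bs (fun x => E x /\ F x).

Local Notation le := (@Order.le d A).
Local Notation B := (subfam Bs).
Local Notation leB := (@subfam_le A Bs).
Implicit Types (a j m w x z : A) (S : A -> Prop) (X Y Z : B).

Definition downB a : B := exist _ (down a) (Bs_down a).

Definition downs S : B -> Prop := fun Y => exists2 s, S s & Y = downB s.

Lemma subfam_downset X x y : x <= y -> proj1_sig X y -> proj1_sig X x.
Proof. exact: (proj1 (Bs_D_ideal (proj2_sig X))). Qed.

Lemma downB_le a X : leB (downB a) X <-> proj1_sig X a.
Proof.
split=> [aX | Xa x xa]; first exact: aX a (lexx a).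
exact: subfam_downset xa Xa.
Qed.

Lemma is_meet_cap X Y :
  is_meet leB X Y (exist _ _ (Bs_cap (proj2_sig X) (proj2_sig Y))).
Proof.
split; first by move=> x [].
split; first by move=> x [].
by move=> Z ZX ZY x Zx; split; [apply: ZX | apply: ZY].
Qed.

(* Sufficient for [X] to be the admissible join of {↓s | s ∈ S} in [B]. *)
Definition dgenerates S (X : A -> Prop) :=
  (forall s, S s -> X s) /\
  forall z, X z -> forall Z, (forall s, S s -> proj1_sig Z (z `&` s)) -> proj1_sig Z z.

Lemma is_lub_downs S X : dgenerates S (proj1_sig X) -> is_lub leB (downs S) X.
Proof.
move=> [SX gen]; split=> [Y [s Ss ->] | Y ubY z Xz]; first exact/downB_le/SX.
apply: (gen _ Xz Y) => s Ss; apply: subfam_downset (leIr s z) _.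
by apply/downB_le; apply: ubY; exists s.
Qed.

Lemma admissible_downs S X : dgenerates S (proj1_sig X) -> admissible leB (downs S).
Proof.
move=> gen; exists X; split=> [|Y M [MY [MX glbM]]]; first exact: is_lub_downs.
split=> [M' [D [s Ss ->] [M'Y [M's _]]] | Z ubZ z Mz].
- by apply: glbM => // x /M's xs; apply: subfam_downset xs (proj1 gen s Ss).
- apply: (proj2 gen z (MX z Mz) Z) => s Ss.
  apply: (ubZ _ (ex_intro2 _ _ (downB s) _ (is_meet_cap Y (downB s)))).
    by exists s.
  by split; [exact: subfam_downset (leIl z s) (MY z Mz) | exact: leIr].
Qed.

Lemma dgenerates_self X : dgenerates (proj1_sig X) (proj1_sig X).
Proof. by split=> // z Xz Z /(_ z Xz); rewrite meetxx. Qed.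

Lemma dgenerates_down_join S j :
  admissible le S -> is_lub le S j -> dgenerates S (proj1_sig (downB j)).
Proof.
move=> admS lubj; split=> [|z zj Z SZ]; first exact: (proj1 lubj).
have [adm_image lubz] := admissible_meet_image admS lubj zj.
apply: (proj2 (Bs_D_ideal (proj2_sig Z)) _ _ adm_image z lubz).
by move=> Y [s Ss ->]; apply: SZ.
Qed.

Lemma D_ideal_restrict (F : BL leB) : D_ideal le (fun a => proj1_sig F (downB a)).
Proof.
have [Fdown Fjoin] := proj2_sig F.
split=> [x y xy | S SF admS j lubj].
  by apply: Fdown => t /= tx; apply: le_trans tx xy.
have gen := dgenerates_down_join admS lubj.
apply: (Fjoin (downs S) _ (admissible_downs gen) _ (is_lub_downs gen)).
by move=> Y [s Ss ->]; apply: SF.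
Qed.

Lemma BL_memE (F : BL leB) X :
  proj1_sig F X <-> forall x, proj1_sig X x -> proj1_sig F (downB x).
Proof.
have [Fdown Fjoin] := proj2_sig F; have gen := dgenerates_self X.
split=> [FX x Xx | FX]; first by apply: Fdown FX; apply/downB_le.
apply: (Fjoin (downs (proj1_sig X)) _ (admissible_downs gen) _ (is_lub_downs gen)).
by move=> Y [x Xx ->]; apply: FX.
Qed.

Section AdmissibleJoin.
Variables (S : B -> Prop) (J : B).
Hypotheses (admS : admissible leB S) (lubJ : is_lub leB S J).

Definition below m : A -> Prop := fun y => y <= m /\ exists2 s, S s & proj1_sig s y.

Lemma is_lub_below m : proj1_sig J m -> is_lub le (below m) m.
Proof.
move=> Jm; split=> [y [] // | w ubw].
have [J' [lubJ' distr]] := admS.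
have J'm : proj1_sig J' m := proj2 lubJ J' (proj1 lubJ') m Jm.
have meet_m : is_meet leB (downB m) J' (downB m).
  by split=> //; split=> [x xm | //]; apply: subfam_downset xm J'm.
have [_ least] := distr _ _ meet_m.
apply: (proj1 (downB_le m (downB w))); apply: least => M' [s Ss [M'm [M's _]]] y M'y.
by apply: ubw; split; [exact: M'm | exists s; last exact: M's].
Qed.

Lemma admissible_below m : proj1_sig J m -> admissible le (below m).
Proof.
move=> Jm; apply/admissibleE; exists m; first exact: is_lub_below.
move=> a; split=> [_ [t [tm _] ->] | w ubw]; first exact: leI2 (lexx a) tm.
have [_ least] := is_lub_below (subfam_downset (leIr m a) Jm).
apply: least => y [ya [s Ss sy]]; apply: ubw; exists y.
  by split; [exact: le_trans ya (leIr m a) | exists s].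
by apply/esym/meet_idPr; apply: le_trans ya (leIl a m).
Qed.

End AdmissibleJoin.

Lemma D_ideal_lift (E : BL le) :
  D_ideal leB (fun X => forall x, proj1_sig X x -> proj1_sig E x).
Proof.
have [Edown Ejoin] := proj2_sig E.
split=> [X Y XY YE x /XY | S SE admS J lubJ m Jm]; first exact: YE.
apply: (Ejoin (below S m) _ (admissible_below admS lubJ Jm) m (is_lub_below admS lubJ Jm)).
by move=> y [_ [s Ss sy]]; apply: SE sy.
Qed.

End Subfamily.

Theorem theorem3p5 (d : Order.disp_t) (A : tMeetSemilatticeType d)
  (Bs : (A -> Prop) -> Prop)
  (* B is a subset of BL A *)
  (HBL : forall E, Bs E -> D_ideal (@Order.le d A) E)
  (* A (via a |-> down a) is contained in B *)
  (HA : forall a : A, Bs (down a))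
  (* B is a sub-meet-semilattice of BL A: closed under the top (= down \top)
     and binary meets (= intersections) of BL A *)
  (Htop : Bs (fun _ => True))
  (Hmeet : forall E F, Bs E -> Bs F -> Bs (fun x => E x /\ F x)) :
  @order_iso (BL (@subfam_le A Bs)) (BL (fun x y : A => (x <= y)%O))
    (@BL_le _ (@subfam_le A Bs)) (@BL_le _ (fun x y : A => (x <= y)%O)).
Proof.
pose f (F : BL (@subfam_le A Bs)) : BL (fun x y : A => x <= y) :=
  exist _ _ (D_ideal_restrict HBL HA Hmeet F).
pose g (E : BL (fun x y : A => x <= y)) : BL (@subfam_le A Bs) :=
  exist _ _ (D_ideal_lift HBL HA E).
exists f, g; split; [|split].
- by move=> F; apply: BL_ext => X; apply: iff_sym (BL_memE HBL HA Hmeet F X).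
- move=> E; apply: BL_ext => a /=; have [Edown _] := proj2_sig E.
  by split=> [/(_ a (lexx a)) | Ea x xa]; last exact: Edown xa Ea.
- move=> F F'; split=> [FF' a | ff' X /(BL_memE HBL HA Hmeet) FX]; first exact: FF'.
  by apply/(BL_memE HBL HA Hmeet) => x /FX; apply: ff'.
Qed.
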